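(* Let $s\ge 1$, $q=4^{2s}$, and let $\theta$ be the automorphism of $F_q$ given by $\theta(a)=a^{4^s}$. Let $n$ be an even positive integer and let $C$ be a skew cyclic code of length $n$ over $F_q$ with respect to $\theta$. If $C$ is a reversible DNA code, then so is its dual code $C^\perp$.
   Context: $F_q[x;\theta]$ is the skew polynomial ring with multiplication determined by $xa=\theta(a)x$. A skew cyclic code of length $n$ is a linear code $C\subseteq F_q^n$ such that $(\theta(c_{n-1}),\theta(c_0),\ldots,\theta(c_{n-2}))\in C$ whenever $(c_0,\ldots,c_{n-1})\in C$. $C^\perp$ is the dual with respect to the standard inner product $\sum_i u_iv_i$ on $F_q^n$. DNA correspondence: there is a fixed bijection $\tau:F_{4^{2s}}\to\{A,T,G,C\}^{2s}$ such that for every $\beta$, $\tau(\beta^{4^s})$ is the reverse of the string $\tau(\beta)$; it extends to $\phi:F_q^n\to\{A,T,G,C\}^{2sn}$ by concatenation, $\phi(c_0,\ldots,c_{n-1})=(\tau(c_0),\ldots,\tau(c_{n-1}))$. A code $C\subseteq F_q^n$ is a reversible DNA code if the reverse string $\phi(c)^r$ lies in $\phi(C)$ for all $c\in C$; equivalently, $(\theta(c_{n-1}),\ldots,\theta(c_1),\theta(c_0))\in C$ for every $(c_0,\ldots,c_{n-1})\in C$. *)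

From HB Require Import structures.
From mathcomp Require Import all_boot all_order all_algebra all_field.
Set Implicit Arguments. Unset Strict Implicit. Unset Printing Implicit Defensive.
Import GRing.Theory.
Local Open Scope ring_scope.

Inductive nucleotide := NA | NT | NG | NC.
Definition nuc_code (x : nucleotide) : nat :=
  match x with NA => 0 | NT => 1 | NG => 2 | NC => 3 end%N.
Definition nuc_decode (k : nat) : nucleotide :=
  match k with 0 => NA | 1 => NT | 2 => NG | _ => NC end%N.
Lemma nuc_codeK : cancel nuc_code nuc_decode. Proof. by case. Qed.
HB.instance Definition _ := Equality.copy nucleotide (can_type nuc_codeK).

Section Codes.
Variables (F : fieldType) (n : nat).

(* theta applied to a vector / skew cyclic shift:
   (c_0,...,c_{n-1}) |-> (theta c_{n-1}, theta c_0, ..., theta c_{n-2}) *)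
Definition skew_shift (theta : F -> F) (c : 'rV[F]_n) : 'rV[F]_n :=
  \row_(i < n) theta (c 0 (ord_pred i)).

Definition skew_reverse (theta : F -> F) (c : 'rV[F]_n) : 'rV[F]_n :=
  \row_(i < n) theta (c 0 (rev_ord i)).

Definition skew_cyclic (theta : F -> F) (C : {vspace 'rV[F]_n}) : Prop :=
  forall c, c \in C -> skew_shift theta c \in C.

Definition dual_code (C : {vspace 'rV[F]_n}) : 'rV[F]_n -> Prop :=
  fun v => forall c : 'rV[F]_n, c \in C -> \sum_(i < n) c 0 i * v 0 i = 0.

Definition dna_phi (tau : F -> seq nucleotide) (c : 'rV[F]_n) : seq nucleotide :=
  flatten [seq tau (c 0 i) | i <- enum 'I_n].

Definition reversible_DNA (tau : F -> seq nucleotide) (C : 'rV[F]_n -> Prop) : Prop :=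
  forall c, C c -> exists2 d, C d & dna_phi tau d = rev (dna_phi tau c).

End Codes.

Definition DNA_correspondence (F : fieldType) (s : nat) (tau : F -> seq nucleotide) : Prop :=
  [/\ forall b, size (tau b) = (2 * s)%N,
      injective tau,
      forall w : seq nucleotide, size w = (2 * s)%N -> exists b, tau b = w
    & forall b, tau (b ^+ (4 ^ s)) = rev (tau b)].

From HB Require Import structures.
From mathcomp Require Import all_boot all_order all_algebra all_field.
Local Open Scope ring_scope.
Import GRing.Theory.

(* Since #|F| = (4^s)^2, theta : a |-> a^(4^s) is an involutive field
   automorphism, and tau (theta b) = rev (tau b) turns the reversal of DNA
   strings into rho (c_0, ..., c_(n-1)) = (theta c_(n-1), ..., theta c_0).
   So a code is a reversible DNA code iff it is closed under rho, and as
   <c, rho v> = theta <rho c, v>, closure under rho passes from C to its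
   dual. *)

Lemma rev_enum_ord n : rev (enum 'I_n) = map (@rev_ord n) (enum 'I_n).
Proof.
apply: (inj_map val_inj); rewrite map_rev val_enum_ord -map_comp.
apply: (@eq_from_nth _ 0%N) => [|m].
  by rewrite size_map size_rev size_iota size_enum_ord.
rewrite size_rev size_iota => lt_m_n.
rewrite nth_rev ?size_iota // (nth_map (Ordinal lt_m_n)) ?size_enum_ord //.
rewrite nth_iota ?(rev_ord_proof (Ordinal lt_m_n)) //=.
by congr (_ - _.+1)%N; apply/esym/nth_enum_ord.
Qed.

Section DNAImage.
Context {F : fieldType} {n : nat} {tau : F -> seq nucleotide}.

Lemma dna_phi_skew_reverse {theta : F -> F} :
  (forall b, tau (theta b) = rev (tau b)) ->
  forall c : 'rV[F]_n, dna_phi tau (skew_reverse theta c) = rev (dna_phi tau c).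
Proof.
move=> tau_theta c.
rewrite /dna_phi rev_flatten -map_rev -(map_rev (fun i => tau (c 0 i))).
rewrite rev_enum_ord -!map_comp.
by congr flatten; apply: eq_map => i /=; rewrite mxE tau_theta.
Qed.

Lemma dna_phi_inj {m : nat} :
  (forall b, size (tau b) = m) -> injective tau -> injective (@dna_phi F n tau).
Proof.
move=> tau_size tau_inj c d; rewrite /dna_phi; set s := enum 'I_n => eq_cd.
have shape_phi (e : 'rV[F]_n) : shape (map (tau \o e 0) s) = map (fun=> m) s.
  by rewrite /shape -map_comp; apply: eq_map => i /=.
have /(inj_map tau_inj) eq_row : map tau (map (c 0) s) = map tau (map (d 0) s).
  rewrite -(map_comp tau (c 0)) -(map_comp tau (d 0)) -[LHS]flattenK -[RHS]flattenK.
  by rewrite !shape_phi eq_cd.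
by move/eq_in_map: eq_row => eq_entries; apply/rowP => j; apply: eq_entries; rewrite mem_enum.
Qed.

End DNAImage.

Definition skew_reverse_closed {F : fieldType} {n : nat} (theta : F -> F)
    (P : 'rV[F]_n -> Prop) : Prop :=
  forall c, P c -> P (skew_reverse theta c).

Section SkewReverse.
Context {F : fieldType} {n : nat} {theta : F -> F}.

Lemma reversible_DNAP {tau : F -> seq nucleotide} {m : nat} {P : 'rV[F]_n -> Prop} :
  (forall b, size (tau b) = m) -> injective tau ->
  (forall b, tau (theta b) = rev (tau b)) ->
  reversible_DNA tau P <-> skew_reverse_closed theta P.
Proof.
move=> tau_size tau_inj tau_theta; split=> [revP c Pc | closedP c Pc].
  have [d Pd] := revP c Pc; rewrite -(dna_phi_skew_reverse tau_theta).
  by move/(dna_phi_inj tau_size tau_inj) <-.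
by exists (skew_reverse theta c); [exact: closedP | exact: dna_phi_skew_reverse].
Qed.

Hypotheses (thetaD : {morph theta : x y / x + y})
           (thetaM : {morph theta : x y / x * y})
           (thetaK : involutive theta).

Lemma theta0 : theta 0 = 0.
Proof. by apply: (addrI (theta 0)); rewrite -thetaD !addr0. Qed.

Lemma dot_skew_reverse (c v : 'rV[F]_n) :
  \sum_(i < n) c 0 i * skew_reverse theta v 0 i =
  theta (\sum_(i < n) skew_reverse theta c 0 i * v 0 i).
Proof.
rewrite (big_morph theta thetaD theta0) (reindex_inj rev_ord_inj) /=.
by apply: eq_bigr => i _; rewrite !mxE thetaM thetaK rev_ordK.
Qed.

Lemma dual_code_skew_reverse_closed (C : {vspace 'rV[F]_n}) :
  skew_reverse_closed theta (fun c => c \in C) ->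
  skew_reverse_closed theta (dual_code C).
Proof.
move=> closedC v dual_v c Cc.
by rewrite dot_skew_reverse dual_v ?closedC // theta0.
Qed.

End SkewReverse.

Lemma expr_sqrt_card_involutive (F : finFieldType) (q : nat) :
  #|F| = (q * q)%N -> involutive (fun x : F => x ^+ q).
Proof. by move=> cardF x; rewrite -exprM -cardF expf_card. Qed.

Theorem corollary2 (s : nat) (F : finFieldType) (n : nat)
    (tau : F -> seq nucleotide) (C : {vspace 'rV[F]_n}) :
  (1 <= s)%N ->
  #|F| = (4 ^ (2 * s))%N ->
  DNA_correspondence s tau ->
  (0 < n)%N -> ~~ odd n ->
  skew_cyclic (fun a : F => a ^+ (4 ^ s)) C ->
  reversible_DNA tau (fun v => v \in C) ->
  reversible_DNA tau (dual_code C).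
Proof.
move=> _ cardF [tau_size tau_inj _ tau_rev] _ _ _.
pose theta (a : F) := a ^+ (4 ^ s).
have tau_theta : forall b, tau (theta b) = rev (tau b) := tau_rev.
have char2 : 2%N \in [pchar F].
  apply: (@card_finPcharP _ _ (4 * s)) => //.
  by rewrite cardF -[4%N]/(2 ^ 2)%N -expnM mulnA.
have thetaD : {morph theta : x y / x + y}.
  move=> x y; apply: exprDn_pchar.
  by rewrite -[4%N]/(2 ^ 2)%N -expnM pnatX pnatE ?char2.
have thetaM : {morph theta : x y / x * y} by move=> x y; apply: exprMn.
have thetaK : involutive theta.
  by apply: expr_sqrt_card_involutive; rewrite cardF -expnD addnn -mul2n.
move/(reversible_DNAP tau_size tau_inj tau_theta) => closedC.
apply/(reversible_DNAP tau_size tau_inj tau_theta).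
exact: dual_code_skew_reverse_closed.
Qed.
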